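(* Let $A$ be a self-adjoint operator on a separable Hilbert space $\mathfrak H$ with dense domain $D(A)$. Let $K\ge1$ and for each $n$ let $(x_n^1,\dots,x_n^K)$ be an orthonormal system of vectors in $D(A)$ such that $x_n^j\rightharpoonup0$ weakly as $n\to\infty$ for every $j=1,\dots,K$. Let $W_n=\mathrm{span}(x_n^1,\dots,x_n^K)$. If $\lambda\in\mathbb R$ satisfies $\lim_{n\to\infty}\mathrm{dist}(\lambda,\sigma(A_{|W_n}))=0$, then $\lambda\in\mathrm{Spu}(A)\cup\sigma(A)$.
   Context: $D(A)$ carries the graph norm $\|x\|_{D(A)}^2=\|x\|^2+\|Ax\|^2$. For a finite-dimensional subspace $V\subset D(A)$, $P_V$ denotes the orthogonal projector onto $V$ and $A_{|V}$ the self-adjoint operator on $V$ given by the restriction of $P_VAP_V$ to $V$. A real number $\lambda$ is a spurious eigenvalue of $A$ (written $\lambda\in\mathrm{Spu}(A)$) if there is a sequence of finite-dimensional subspaces $V_n\subset D(A)$ with $V_n\subset V_{n+1}$ such that (i) $\bigcup_n V_n$ is dense in $D(A)$ for the graph norm; (ii) $\lim_{n\to\infty}\mathrm{dist}(\lambda,\sigma(A_{|V_n}))=0$; (iii) $\lambda\notin\sigma(A)$. *)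

From Stdlib Require Import Reals Lra List Arith.
Open Scope R_scope.

Record Cplx := mkC { Cre : R; Cim : R }.
Definition Czero : Cplx := mkC 0 0.
Definition Cone : Cplx := mkC 1 0.
Definition RtoC (r : R) : Cplx := mkC r 0.
Definition Cadd (a b : Cplx) : Cplx := mkC (Cre a + Cre b) (Cim a + Cim b).
Definition Copp (a : Cplx) : Cplx := mkC (- Cre a) (- Cim a).
Definition Cmul (a b : Cplx) : Cplx :=
  mkC (Cre a * Cre b - Cim a * Cim b) (Cre a * Cim b + Cim a * Cre b).
Definition Cconj (a : Cplx) : Cplx := mkC (Cre a) (- Cim a).
Definition Cmod (a : Cplx) : R := sqrt (Cre a * Cre a + Cim a * Cim a).

Record HilbertSpace := {
  hT :> Type;
  hzero : hT;
  hadd : hT -> hT -> hT;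
  hopp : hT -> hT;
  hscal : Cplx -> hT -> hT;
  hinner : hT -> hT -> Cplx;  (* linear in the first, conjugate-linear in the second argument *)
  hadd_assoc : forall x y z, hadd x (hadd y z) = hadd (hadd x y) z;
  hadd_comm : forall x y, hadd x y = hadd y x;
  hadd_zero : forall x, hadd x hzero = x;
  hadd_opp : forall x, hadd x (hopp x) = hzero;
  hscal_one : forall x, hscal Cone x = x;
  hscal_assoc : forall a b x, hscal a (hscal b x) = hscal (Cmul a b) x;
  hscal_addv : forall a x y, hscal a (hadd x y) = hadd (hscal a x) (hscal a y);
  hscal_adds : forall a b x, hscal (Cadd a b) x = hadd (hscal a x) (hscal b x);
  hinner_conj : forall x y, hinner y x = Cconj (hinner x y);
  hinner_add : forall x y z, hinner (hadd x y) z = Cadd (hinner x z) (hinner y z);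
  hinner_scal : forall a x y, hinner (hscal a x) y = Cmul a (hinner x y);
  hinner_pos : forall x, 0 <= Cre (hinner x x);
  hinner_def : forall x, Cre (hinner x x) = 0 -> x = hzero;
  hcomplete : forall u : nat -> hT,
    (forall eps, eps > 0 -> exists N, forall m n, (m >= N)%nat -> (n >= N)%nat ->
        sqrt (Cre (hinner (hadd (u m) (hopp (u n))) (hadd (u m) (hopp (u n))))) < eps) ->
    exists l, forall eps, eps > 0 -> exists N, forall n, (n >= N)%nat ->
        sqrt (Cre (hinner (hadd (u n) (hopp l)) (hadd (u n) (hopp l)))) < eps;
  hseparable : exists e : nat -> hT, forall x eps, eps > 0 -> exists k,
        sqrt (Cre (hinner (hadd x (hopp (e k))) (hadd x (hopp (e k))))) < eps
}.

Section HilbertDefs.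
Variable E : HilbertSpace.

Definition hsub (x y : E) : E := hadd E x (hopp E y).
Definition hnorm (x : E) : R := sqrt (Cre (hinner E x x)).

(* ---------- unbounded operators: a domain D and a map A (values off D irrelevant) ---------- *)
Definition is_subspace (D : E -> Prop) : Prop :=
  D (hzero E) /\ (forall x y, D x -> D y -> D (hadd E x y)) /\
  (forall a x, D x -> D (hscal E a x)).

Definition is_dense (D : E -> Prop) : Prop :=
  forall x eps, eps > 0 -> exists y, D y /\ hnorm (hsub x y) < eps.

(* A self-adjoint operator with dense domain D: linear, symmetric, and D(A^* ) ⊆ D(A),
   i.e. A = A^*. *)
Definition is_self_adjoint (D : E -> Prop) (A : E -> E) : Prop :=
  is_subspace D /\ is_dense D /\
  (forall x y, D x -> D y -> A (hadd E x y) = hadd E (A x) (A y)) /\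
  (forall a x, D x -> A (hscal E a x) = hscal E a (A x)) /\
  (forall x y, D x -> D y -> hinner E (A x) y = hinner E x (A y)) /\
  (forall y z, (forall x, D x -> hinner E (A x) y = hinner E x z) -> D y /\ A y = z).

(* resolvent set (real points): A - λ : D(A) -> H is bijective with bounded inverse *)
Definition in_resolvent (D : E -> Prop) (A : E -> E) (lam : R) : Prop :=
  exists B : E -> E,
    (forall y, D (B y) /\ hsub (A (B y)) (hscal E (RtoC lam) (B y)) = y) /\
    (forall x, D x -> B (hsub (A x) (hscal E (RtoC lam) x)) = x) /\
    (exists c, forall y, hnorm (B y) <= c * hnorm y).

Definition in_spectrum (D : E -> Prop) (A : E -> E) (lam : R) : Prop :=
  ~ in_resolvent D A lam.

Fixpoint lincomb (cs : list Cplx) (vs : list E) : E :=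
  match cs, vs with
  | c :: cs', v :: vs' => hadd E (hscal E c v) (lincomb cs' vs')
  | _, _ => hzero E
  end.

Definition span (vs : list E) (x : E) : Prop :=
  exists cs : list Cplx, length cs = length vs /\ x = lincomb cs vs.

(* spectrum of A_{|V} = restriction of P_V A P_V to V (V = span vs ⊆ D(A)):
   μ is an eigenvalue iff some nonzero v ∈ V has P_V(A v) = μ v, i.e.
   <A v - μ v, w> = 0 for all w ∈ V.  A_{|V} is self-adjoint on a finite-dim.
   space, so its spectrum is a finite subset of R. *)
Definition in_spectrum_compression (A : E -> E) (vs : list E) (mu : R) : Prop :=
  exists v, span vs v /\ v <> hzero E /\
    forall w, span vs w -> hinner E (hsub (A v) (hscal E (RtoC mu) v)) w = Czero.

(* lim_n dist(λ, S_n) = 0, with dist(λ,S) = inf_{μ∈S} |λ-μ| (inf ∅ = +∞):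
   dist(λ,S) < ε  iff  ∃ μ ∈ S, |λ-μ| < ε. *)
Definition dist_tends_to_zero (lam : R) (S : nat -> R -> Prop) : Prop :=
  forall eps, eps > 0 -> exists N, forall n, (n >= N)%nat ->
    exists mu, S n mu /\ Rabs (lam - mu) < eps.

Definition spurious (D : E -> Prop) (A : E -> E) (lam : R) : Prop :=
  exists V : nat -> list E,
    (forall n v, In v (V n) -> D v) /\
    (forall n x, span (V n) x -> span (V (S n)) x) /\
    (forall x eps, D x -> eps > 0 -> exists n y, span (V n) y /\
        hnorm (hsub x y) ^ 2 + hnorm (hsub (A x) (A y)) ^ 2 < eps ^ 2) /\
    dist_tends_to_zero lam (fun n => in_spectrum_compression A (V n)) /\
    ~ in_spectrum D A lam.

Definition weakly_to_zero (u : nat -> E) : Prop :=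
  forall y eps, eps > 0 -> exists N, forall n, (n >= N)%nat ->
    Cmod (hinner E (u n) y) < eps.

End HilbertDefs.

(* If λ ∉ σ(A) we show λ ∈ Spu(A).

   Since λ is in the resolvent set, T = A - λ has a bounded inverse B : H -> D(A).
   We build nested lists V_n ⊂ D(A) of the form
       V_{n+1} = L_n ++ [z_n],   L_n = V_n ++ [B e_n],
   where (e_k) is dense in H.  The vectors B e_k are dense in D(A) for the graph
   norm (x - B e = B(Tx - e) and A(x - B e) = (Tx - e) + λ B(Tx - e)), which gives
   condition (i) of Spu(A).  The vector z_n satisfies z_n ⊥ L_n, A z_n ⊥ L_n and
   ⟨A z_n, z_n⟩ = μ ⟨z_n, z_n⟩ with |λ - μ| < 1/(n+1), so μ is an eigenvalue of
   the compression to V_{n+1}, which gives condition (ii).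

   The vector z (the "spectral step") is found as follows: choose unit vectors v_m in
   W_m with ⟨A v_m, v_m⟩ → λ; they are weakly null.  Project T v_m orthogonally off
   the finite-dimensional span of L ∪ B L (via Gram–Schmidt) and put
   z = B(T v_m - q_m).  Orthogonality to L and AL is then automatic, and because
   v_m ⇀ 0 the finite-rank corrections q_m and B q_m are negligible, so the Rayleigh
   quotient of z is close to λ for m large. *)

From Stdlib Require Import Reals Lra Lia List Classical ClassicalEpsilon.
Open Scope R_scope.

Notation "<< x , y >>" := (hinner _ x y).
Notation "x +v y" := (hadd _ x y) (at level 50, left associativity).
Notation "a *v x" := (hscal _ a x) (at level 40).

Lemma Ceq (a b : Cplx) : Cre a = Cre b -> Cim a = Cim b -> a = b.
Proof. destruct a, b; simpl; intros; subst; reflexivity. Qed.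

Ltac cring := apply Ceq; unfold Cadd, Cmul, Copp, Cconj, RtoC, Czero, Cone; simpl; ring.

Lemma Rabs_Cre_Cmod a : Rabs (Cre a) <= Cmod a.
Proof. unfold Cmod. rewrite <- sqrt_Rsqr_abs. apply sqrt_le_1_alt. unfold Rsqr. nra. Qed.

Lemma Rabs_Cim_Cmod a : Rabs (Cim a) <= Cmod a.
Proof. unfold Cmod. rewrite <- sqrt_Rsqr_abs. apply sqrt_le_1_alt. unfold Rsqr. nra. Qed.

Section InnerProduct.
Variable E : HilbertSpace.

Lemma inner_zero_l (y : E) : << hzero E, y >> = Czero.
Proof.
  assert (H : << hzero E +v hzero E, y >> = << hzero E, y >>) by now rewrite hadd_zero.
  rewrite hinner_add in H. pose proof (f_equal Cre H). pose proof (f_equal Cim H).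
  simpl in *. apply Ceq; simpl; lra.
Qed.

Lemma inner_opp_l (x y : E) : << hopp E x, y >> = Copp << x, y >>.
Proof.
  assert (H : << x +v hopp E x, y >> = Czero) by (rewrite hadd_opp; apply inner_zero_l).
  rewrite hinner_add in H. pose proof (f_equal Cre H). pose proof (f_equal Cim H).
  simpl in *. apply Ceq; simpl; lra.
Qed.

Lemma inner_add_r (x y z : E) : << x, y +v z >> = Cadd << x, y >> << x, z >>.
Proof.
  rewrite hinner_conj, hinner_add, (hinner_conj E y x), (hinner_conj E z x). cring.
Qed.

Lemma inner_scal_r a (x y : E) : << x, a *v y >> = Cmul (Cconj a) << x, y >>.
Proof. rewrite hinner_conj, hinner_scal, (hinner_conj E y x). cring. Qed.

Lemma inner_opp_r (x y : E) : << x, hopp E y >> = Copp << x, y >>.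
Proof. rewrite hinner_conj, inner_opp_l, (hinner_conj E y x). cring. Qed.

Lemma inner_zero_r (x : E) : << x, hzero E >> = Czero.
Proof. rewrite hinner_conj, inner_zero_l. cring. Qed.

Lemma inner_sub_l (x y z : E) : << hsub E x y, z >> = Cadd << x, z >> (Copp << y, z >>).
Proof. unfold hsub. now rewrite hinner_add, inner_opp_l. Qed.

Lemma inner_sub_r (x y z : E) : << x, hsub E y z >> = Cadd << x, y >> (Copp << x, z >>).
Proof. unfold hsub. now rewrite inner_add_r, inner_opp_r. Qed.

(* Vectors with the same inner products against every vector are equal; this turns
   every vector identity into a complex-number identity. *)
Lemma vec_ext (u v : E) : (forall w, << u, w >> = << v, w >>) -> u = v.
Proof.
  intros H.
  assert (H0 : hsub E u v = hzero E).
  { apply hinner_def. rewrite inner_sub_l, H. simpl. lra. }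
  unfold hsub in H0.
  rewrite <- (hadd_zero E u), <- (hadd_opp E v), (hadd_comm E v (hopp E v)), hadd_assoc, H0.
  rewrite hadd_comm, hadd_zero. reflexivity.
Qed.

Lemma inner_im_self (x : E) : Cim << x, x >> = 0.
Proof. pose proof (f_equal Cim (hinner_conj E x x)) as H. simpl in H. lra. Qed.

Lemma inner_self_real (x : E) : << x, x >> = RtoC (Cre << x, x >>).
Proof. apply Ceq; simpl; [reflexivity | apply inner_im_self]. Qed.

Lemma inner_self_pos (x : E) : x <> hzero E -> Cre << x, x >> > 0.
Proof.
  intros Hx. destruct (Rle_lt_or_eq_dec _ _ (hinner_pos E x)) as [H|H]; [lra|].
  exfalso. apply Hx, hinner_def. auto.
Qed.

Lemma hnorm_sq (u : E) : hnorm E u ^ 2 = Cre << u, u >>.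
Proof. unfold hnorm. simpl. rewrite Rmult_1_r. apply sqrt_sqrt, hinner_pos. Qed.

End InnerProduct.

Ltac inner_simpl :=
  repeat rewrite ?hinner_add, ?hinner_scal, ?inner_opp_l, ?inner_zero_l, ?inner_sub_l,
     ?inner_add_r, ?inner_scal_r, ?inner_opp_r, ?inner_zero_r, ?inner_sub_r.

Section VectorAlgebra.
Variable E : HilbertSpace.

Lemma opp_scal (x : E) : hopp E x = RtoC (-1) *v x.
Proof. apply vec_ext; intro w. inner_simpl. cring. Qed.

Lemma scal_zero_v (x : E) : Czero *v x = hzero E.
Proof. apply vec_ext; intro w. inner_simpl. cring. Qed.

Lemma scal_v_zero a : a *v hzero E = hzero E.
Proof. apply vec_ext; intro w. inner_simpl. cring. Qed.

Lemma add_zero_l (x : E) : hzero E +v x = x.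
Proof. rewrite hadd_comm. apply hadd_zero. Qed.

Lemma norm_add_scal_bound (a b : E) (l : R) :
  Cre << a +v (RtoC l *v b), a +v (RtoC l *v b) >> <=
  2 * Cre << a, a >> + 2 * (l * l) * Cre << b, b >>.
Proof.
  pose proof (hinner_pos E (hsub E a (RtoC l *v b))) as H.
  unfold hsub in H. inner_simpl. revert H. inner_simpl. simpl. intros. nra.
Qed.

End VectorAlgebra.

Section LinearCombinations.
Variable E : HilbertSpace.

Definition lsum (l : list E) : E := fold_right (hadd E) (hzero E) l.
Definition Csum (l : list Cplx) : Cplx := fold_right Cadd Czero l.

Lemma inner_lsum_scal (k : E -> Cplx) (f : E -> E) (R : list E) (h : E) :
  << lsum (map (fun s => k s *v f s) R), h >> =
  Csum (map (fun s => Cmul (k s) << f s, h >>) R).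
Proof. induction R; simpl. apply inner_zero_l. now rewrite hinner_add, hinner_scal, IHR. Qed.

Lemma inner_lsum_orth (y : E) (c : E -> Cplx) (R : list E) :
  (forall r, In r R -> << y, r >> = Czero) ->
  << y, lsum (map (fun s => c s *v s) R) >> = Czero.
Proof.
  induction R; simpl; intros H. apply inner_zero_r.
  rewrite inner_add_r, inner_scal_r, H, IHR by auto. cring.
Qed.

Lemma inner_lincomb_orth (u : E) cs vs :
  (forall v, In v vs -> << u, v >> = Czero) -> << u, lincomb E cs vs >> = Czero.
Proof.
  revert cs; induction vs as [|v vs IH]; intros cs H; destruct cs; simpl;
    try apply inner_zero_r.
  rewrite inner_add_r, inner_scal_r, H by (left; auto).
  rewrite IH by (intros; apply H; right; auto). cring.
Qed.

Lemma lincomb_zeros k vs : lincomb E (repeat Czero k) vs = hzero E.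
Proof.
  revert vs; induction k; intros vs; destruct vs; simpl; auto.
  now rewrite IHk, scal_zero_v, hadd_zero.
Qed.

Lemma lincomb_app cs1 cs2 vs1 vs2 : length cs1 = length vs1 ->
  lincomb E (cs1 ++ cs2) (vs1 ++ vs2) = lincomb E cs1 vs1 +v lincomb E cs2 vs2.
Proof.
  revert vs1; induction cs1; intros vs1 Hl; destruct vs1; simpl in *; try lia.
  - now rewrite add_zero_l.
  - rewrite IHcs1 by lia. apply hadd_assoc.
Qed.

Lemma lincomb_scal a cs vs : lincomb E (map (Cmul a) cs) vs = a *v lincomb E cs vs.
Proof.
  revert vs; induction cs; intros vs; destruct vs; simpl; try (now rewrite scal_v_zero).
  rewrite IHcs. apply vec_ext; intro w. inner_simpl. cring.
Qed.

Lemma span_app_l vs ws (x : E) : span E vs x -> span E (vs ++ ws) x.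
Proof.
  intros [cs [Hl Hx]]. exists (cs ++ repeat Czero (length ws)). split.
  - rewrite !length_app, repeat_length. lia.
  - now rewrite lincomb_app, lincomb_zeros, hadd_zero.
Qed.

Lemma span_app_r vs ws (x : E) : span E ws x -> span E (vs ++ ws) x.
Proof.
  intros [cs [Hl Hx]]. exists (repeat Czero (length vs) ++ cs). split.
  - rewrite !length_app, repeat_length. lia.
  - rewrite lincomb_app by (now rewrite repeat_length). now rewrite lincomb_zeros, add_zero_l.
Qed.

Lemma span_single (v : E) : span E (v :: nil) v.
Proof. exists (Cone :: nil). split; auto. simpl. now rewrite hadd_zero, hscal_one. Qed.

Lemma span_scal vs a (x : E) : span E vs x -> span E vs (a *v x).
Proof.
  intros [cs [Hl Hx]]. exists (map (Cmul a) cs). split.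
  - now rewrite length_map.
  - now rewrite lincomb_scal, Hx.
Qed.

Fixpoint orthonormal (vs : list E) : Prop :=
  match vs with
  | nil => True
  | v :: vs' => << v, v >> = Cone /\ (forall w, In w vs' -> << v, w >> = Czero) /\
                orthonormal vs'
  end.

Definition sqsum (cs : list Cplx) : R :=
  fold_right (fun c acc => Cre c * Cre c + Cim c * Cim c + acc) 0 cs.

Lemma sqsum_nonneg cs : 0 <= sqsum cs.
Proof. induction cs; simpl; nra. Qed.

Lemma sqsum_bound cs c : In c cs -> Cre c * Cre c + Cim c * Cim c <= sqsum cs.
Proof.
  induction cs; simpl; intros H; [contradiction|].
  pose proof (sqsum_nonneg cs). destruct H; subst; [lra|].
  specialize (IHcs H). nra.
Qed.

Lemma lincomb_norm cs vs : orthonormal vs -> length cs = length vs ->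
  Cre << lincomb E cs vs, lincomb E cs vs >> = sqsum cs.
Proof.
  revert cs; induction vs as [|v vs IH]; intros cs Hon Hl; destruct cs; simpl in *; try lia.
  - now rewrite inner_zero_l.
  - destruct Hon as [H1 [H2 H3]].
    assert (Ho : << v, lincomb E cs vs >> = Czero) by (apply inner_lincomb_orth; auto).
    assert (Ho' : << lincomb E cs vs, v >> = Czero) by (rewrite hinner_conj, Ho; cring).
    inner_simpl. rewrite H1, Ho, Ho'. simpl. rewrite <- (IH cs) by (auto; lia). ring.
Qed.

Lemma lincomb_inner_bound cs vs (h : E) d :
  (forall c, In c cs -> -1 <= Cre c <= 1 /\ -1 <= Cim c <= 1) ->
  (forall v, In v vs -> Rabs (Cre << v, h >>) <= d /\ Rabs (Cim << v, h >>) <= d) ->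
  Rabs (Cre << lincomb E cs vs, h >>) <= 2 * d * INR (length vs) /\
  Rabs (Cim << lincomb E cs vs, h >>) <= 2 * d * INR (length vs).
Proof.
  revert cs; induction vs as [|v vs IH]; intros cs Hc Hv.
  - destruct cs; simpl; rewrite inner_zero_l; simpl; rewrite Rabs_R0; split; lra.
  - assert (Hd : 0 <= d).
    { destruct (Hv v (or_introl eq_refl)) as [Ha _]. pose proof (Rabs_pos (Cre << v, h >>)). lra. }
    pose proof (pos_INR (length vs)). simpl length. rewrite S_INR.
    destruct cs as [|c cs].
    + simpl; rewrite inner_zero_l; simpl; rewrite Rabs_R0; split; nra.
    + destruct (IH cs) as [I1 I2];
        [intros; apply Hc; right; auto | intros; apply Hv; right; auto |].
      destruct (Hc c (or_introl eq_refl)) as [C1 C2].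
      destruct (Hv v (or_introl eq_refl)) as [V1 V2].
      simpl lincomb. rewrite hinner_add, hinner_scal. simpl.
      revert I1 I2 V1 V2. generalize (Cre << v, h >>) (Cim << v, h >>)
        (Cre << lincomb E cs vs, h >>) (Cim << lincomb E cs vs, h >>).
      intros a b x y. unfold Rabs; repeat destruct Rcase_abs; intros; split; nra.
Qed.

End LinearCombinations.

Definition cnull (a : nat -> Cplx) : Prop :=
  forall eps, eps > 0 -> exists N, forall m, (m >= N)%nat ->
    Rabs (Cre (a m)) < eps /\ Rabs (Cim (a m)) < eps.

Lemma cnull_ext a b : (forall m, a m = b m) -> cnull a -> cnull b.
Proof.
  intros H Ha eps He. destruct (Ha eps He) as [N HN]. exists N. intros m Hm.
  rewrite <- H. auto.
Qed.

Lemma cnull_zero : cnull (fun _ => Czero).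
Proof. intros eps He. exists 0%nat. intros. simpl. rewrite Rabs_R0. lra. Qed.

Lemma cnull_add a b : cnull a -> cnull b -> cnull (fun m => Cadd (a m) (b m)).
Proof.
  intros Ha Hb eps He. destruct (Ha (eps/2)) as [N1 H1]; [lra|].
  destruct (Hb (eps/2)) as [N2 H2]; [lra|]. exists (N1 + N2)%nat. intros m Hm.
  destruct (H1 m) as [A1 A2]; [lia|]. destruct (H2 m) as [B1 B2]; [lia|]. simpl.
  revert A1 A2 B1 B2. generalize (Cre (a m)) (Cim (a m)) (Cre (b m)) (Cim (b m)).
  intros. unfold Rabs in *; repeat destruct Rcase_abs; split; lra.
Qed.

Lemma cnull_opp a : cnull a -> cnull (fun m => Copp (a m)).
Proof.
  intros Ha eps He. destruct (Ha eps He) as [N H]. exists N. intros m Hm. simpl.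
  rewrite !Rabs_Ropp. auto.
Qed.

Lemma cnull_conj a : cnull a -> cnull (fun m => Cconj (a m)).
Proof.
  intros Ha eps He. destruct (Ha eps He) as [N H]. exists N. intros m Hm. simpl.
  rewrite Rabs_Ropp. auto.
Qed.

Lemma Cmul_parts_bound (a b : Cplx) k e : 0 < e ->
  Rabs (Cre a) <= k -> Rabs (Cim a) <= k -> Rabs (Cre b) < e -> Rabs (Cim b) < e ->
  Rabs (Cre (Cmul a b)) <= 2 * k * e /\ Rabs (Cim (Cmul a b)) <= 2 * k * e.
Proof.
  intros He Ha1 Ha2 Hb1 Hb2. simpl.
  assert (Hp : forall r s, Rabs r <= k -> Rabs s < e -> Rabs (r * s) <= k * e).
  { intros r s Hr Hs. rewrite Rabs_mult.
    apply Rmult_le_compat; try apply Rabs_pos; lra. }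
  pose proof (Hp _ _ Ha1 Hb1). pose proof (Hp _ _ Ha1 Hb2).
  pose proof (Hp _ _ Ha2 Hb1). pose proof (Hp _ _ Ha2 Hb2).
  pose proof (Rabs_triang (Cre a * Cre b) (- (Cim a * Cim b))).
  pose proof (Rabs_triang (Cre a * Cim b) (Cim a * Cre b)).
  rewrite Rabs_Ropp in *. unfold Rminus. split; lra.
Qed.

Lemma cnull_mul_bounded (a b : nat -> Cplx) k : 0 < k ->
  (forall m, Rabs (Cre (a m)) <= k /\ Rabs (Cim (a m)) <= k) ->
  cnull b -> cnull (fun m => Cmul (a m) (b m)).
Proof.
  intros Hk Ha Hb eps He. destruct (Hb (eps / (4 * k))) as [N HN].
  { apply Rdiv_lt_0_compat; lra. }
  exists N. intros m Hm. destruct (HN m Hm) as [B1 B2]. destruct (Ha m) as [A1 A2].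
  destruct (Cmul_parts_bound (a m) (b m) k (eps / (4 * k))) as [M1 M2]; auto.
  { apply Rdiv_lt_0_compat; lra. }
  assert (Hval : 2 * k * (eps / (4 * k)) = eps / 2) by (field; lra).
  split; lra.
Qed.

Lemma cnull_scal (c : Cplx) (a : nat -> Cplx) : cnull a -> cnull (fun m => Cmul c (a m)).
Proof.
  apply (cnull_mul_bounded (fun _ => c) a (Rabs (Cre c) + Rabs (Cim c) + 1)).
  - pose proof (Rabs_pos (Cre c)). pose proof (Rabs_pos (Cim c)). lra.
  - intros _. pose proof (Rabs_pos (Cre c)). pose proof (Rabs_pos (Cim c)). lra.
Qed.

Lemma cnull_scal_r (c : Cplx) (a : nat -> Cplx) : cnull a -> cnull (fun m => Cmul (a m) c).
Proof.
  intros H. apply (cnull_ext (fun m => Cmul c (a m))); [intros; cring | now apply cnull_scal].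
Qed.

(* Null sequences are eventually bounded by 1, so products of null sequences are null. *)
Lemma cnull_mul a b : cnull a -> cnull b -> cnull (fun m => Cmul (a m) (b m)).
Proof.
  intros Ha Hb eps He. destruct (Ha 1) as [N1 H1]; [lra|].
  set (a' := fun m => if (m <? N1)%nat then Czero else a m).
  assert (Ha' : forall m, Rabs (Cre (a' m)) <= 1 /\ Rabs (Cim (a' m)) <= 1).
  { intros m. unfold a'. destruct (Nat.ltb_spec m N1).
    - simpl. rewrite Rabs_R0. lra.
    - destruct (H1 m) as [? ?]; [lia | lra]. }
  destruct (cnull_mul_bounded a' b 1 ltac:(lra) Ha' Hb eps He) as [N2 H2].
  exists (N1 + N2)%nat. intros m Hm. specialize (H2 m ltac:(lia)). unfold a' in H2.
  destruct (Nat.ltb_spec m N1); [lia | exact H2].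
Qed.

Lemma cnull_Csum {I : Type} (F : nat -> I -> Cplx) (l : list I) :
  (forall t, In t l -> cnull (fun m => F m t)) -> cnull (fun m => Csum (map (F m) l)).
Proof.
  induction l as [|t l IH]; intros H; simpl.
  - apply cnull_zero.
  - apply (cnull_add (fun m => F m t) (fun m => Csum (map (F m) l))).
    + apply H; left; auto.
    + apply IH. intros; apply H; right; auto.
Qed.

Section OrthonormalSystem.
Variable E : HilbertSpace.
Variable K : nat.
Variable x : nat -> nat -> E.
Hypothesis hON : forall n i j, (i < K)%nat -> (j < K)%nat ->
  << x n i, x n j >> = if Nat.eq_dec i j then Cone else Czero.
Hypothesis hweak : forall j, (j < K)%nat -> weakly_to_zero E (fun n => x n j).

Definition W (m : nat) : list E := map (x m) (seq 0 K).

Lemma in_W m v : In v (W m) -> exists j, (j < K)%nat /\ v = x m j.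
Proof.
  unfold W. rewrite in_map_iff. intros [j [<- Hj]]. rewrite in_seq in Hj.
  exists j. split; auto; lia.
Qed.

Lemma length_W m : length (W m) = K.
Proof. unfold W. now rewrite length_map, length_seq. Qed.

Lemma orthonormal_W m : orthonormal E (W m).
Proof.
  assert (Hseg : forall k a, (a + k <= K)%nat -> orthonormal E (map (x m) (seq a k))).
  { induction k; intros a Hk; simpl; auto. split; [|split].
    - rewrite hON by lia. destruct Nat.eq_dec; [auto|lia].
    - intros w Hw. rewrite in_map_iff in Hw. destruct Hw as [j [<- Hj]].
      rewrite in_seq in Hj. rewrite hON by lia. destruct Nat.eq_dec; [lia|auto].
    - apply IHk. lia. }
  apply Hseg. lia.
Qed.

Lemma weak_uniform h d : d > 0 -> exists N, forall m j, (m >= N)%nat -> (j < K)%nat ->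
  Cmod << x m j, h >> < d.
Proof.
  intros Hd. assert (HK : (K <= K)%nat) by lia. revert HK.
  generalize K at 1 3 as k. induction k; intros Hk.
  - exists 0%nat. intros; lia.
  - destruct IHk as [N1 H1]; [lia|]. destruct (hweak k Hk h d Hd) as [N2 H2].
    exists (N1 + N2)%nat. intros m j Hm Hj.
    destruct (Nat.eq_dec j k); [subst; apply H2; lia | apply H1; lia].
Qed.

(* Unit vectors v_m ∈ W_m converge weakly to 0: their coefficients are bounded by 1. *)
Lemma unit_span_weakly_null (v : nat -> E) :
  (forall m, span E (W m) (v m) /\ Cre << v m, v m >> = 1) ->
  forall h, cnull (fun m => << v m, h >>).
Proof.
  intros Hv h eps He.
  set (d := eps / (2 * INR K + 1)).
  assert (Hk : 0 <= INR K) by apply pos_INR.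
  assert (Hd : d > 0) by (unfold d; apply Rdiv_lt_0_compat; lra).
  destruct (weak_uniform h d Hd) as [N HN]. exists N. intros m Hm.
  destruct (Hv m) as [[cs [Hl Hc]] Hn].
  assert (Hsq : sqsum cs = 1).
  { rewrite <- (lincomb_norm E cs (W m)), <- Hc; auto using orthonormal_W. }
  assert (Hcb : forall c, In c cs -> -1 <= Cre c <= 1 /\ -1 <= Cim c <= 1).
  { intros c Hin. pose proof (sqsum_bound cs c Hin). split; nra. }
  assert (Hvb : forall w, In w (W m) ->
                Rabs (Cre << w, h >>) <= d /\ Rabs (Cim << w, h >>) <= d).
  { intros w Hw. destruct (in_W m w Hw) as [j [Hj ->]]. specialize (HN m j Hm Hj).
    pose proof (Rabs_Cre_Cmod << x m j, h >>). pose proof (Rabs_Cim_Cmod << x m j, h >>).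
    split; lra. }
  destruct (lincomb_inner_bound E cs (W m) h d Hcb Hvb) as [B1 B2].
  rewrite length_W, <- Hc in B1, B2.
  assert (Hlt : 2 * d * INR K < eps).
  { unfold d. apply (Rmult_lt_reg_r (2 * INR K + 1)); [lra|].
    replace (2 * (eps / (2 * INR K + 1)) * INR K * (2 * INR K + 1))
      with (eps * (2 * INR K)) by (field; lra). nra. }
  split; lra.
Qed.

End OrthonormalSystem.

Section SelfAdjoint.
Variable E : HilbertSpace.
Variable D : E -> Prop.
Variable A : E -> E.
Hypothesis hA : is_self_adjoint E D A.

Lemma D_zero : D (hzero E).
Proof. destruct hA as [[H _] _]. auto. Qed.
Lemma D_add x y : D x -> D y -> D (x +v y).
Proof. destruct hA as [[_ [H _]] _]. auto. Qed.
Lemma D_scal a x : D x -> D (a *v x).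
Proof. destruct hA as [[_ [_ H]] _]. auto. Qed.
Lemma D_sub x y : D x -> D y -> D (hsub E x y).
Proof. intros. unfold hsub. rewrite opp_scal. auto using D_add, D_scal. Qed.
Lemma D_lsum (f : E -> E) R : (forall r, In r R -> D (f r)) -> D (lsum E (map f R)).
Proof. induction R; simpl; intros H. apply D_zero. apply D_add; auto. Qed.

Lemma D_span vs v : (forall w, In w vs -> D w) -> span E vs v -> D v.
Proof.
  intros H [cs [_ ->]]. revert cs; induction vs; intros cs; destruct cs; simpl;
    try apply D_zero.
  apply D_add; [apply D_scal, H; left; auto | apply IHvs; intros; apply H; right; auto].
Qed.

Lemma A_add x y : D x -> D y -> A (x +v y) = A x +v A y.
Proof. destruct hA as [_ [_ [H _]]]. auto. Qed.
Lemma A_scal a x : D x -> A (a *v x) = a *v A x.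
Proof. destruct hA as [_ [_ [_ [H _]]]]. auto. Qed.
Lemma A_sym x y : D x -> D y -> << A x, y >> = << x, A y >>.
Proof. destruct hA as [_ [_ [_ [_ [H _]]]]]. auto. Qed.
Lemma A_sub x y : D x -> D y -> A (hsub E x y) = hsub E (A x) (A y).
Proof.
  intros. unfold hsub. rewrite !opp_scal, A_add, A_scal; auto using D_scal.
Qed.

Lemma inner_im_self_A z : D z -> Cim << A z, z >> = 0.
Proof.
  intros Hz. pose proof (f_equal Cim (A_sym z z Hz Hz)) as H.
  rewrite (hinner_conj E (A z) z) in H. simpl in H. lra.
Qed.

Lemma rayleigh_eq z : D z -> Cre << z, z >> <> 0 ->
  << A z, z >> = Cmul (RtoC (Cre << A z, z >> / Cre << z, z >>)) << z, z >>.
Proof.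
  intros Hz Hn. pose proof (inner_im_self_A z Hz). pose proof (inner_im_self E z).
  apply Ceq; simpl; [field|]; nra.
Qed.

Definition compression_eigvec (L : list E) (z : E) (mu : R) : Prop :=
  D z /\ z <> hzero E /\
  (forall l, In l L -> << z, l >> = Czero /\ << A z, l >> = Czero) /\
  << A z, z >> = Cmul (RtoC mu) << z, z >>.

Lemma compression_eigvec_spectrum L z mu :
  compression_eigvec L z mu -> in_spectrum_compression E A (L ++ z :: nil) mu.
Proof.
  intros [_ [Hz0 [Horth Heig]]]. exists z. split; [apply span_app_r, span_single|].
  split; auto. intros w [cs [_ ->]]. apply inner_lincomb_orth. intros v Hv.
  apply in_app_or in Hv. destruct Hv as [Hv|[<-|[]]].
  - destruct (Horth v Hv) as [H1 H2]. rewrite inner_sub_l, hinner_scal, H1, H2. cring.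
  - rewrite inner_sub_l, hinner_scal, Heig. cring.
Qed.

Definition orth (a b : E) : Prop := << a, b >> = Czero.
Definition proj_coef (x s : E) : Cplx := Cmul << x, s >> (RtoC (/ Cre << s, s >>)).
Definition proj (R : list E) (x : E) : E := lsum E (map (fun s => proj_coef x s *v s) R).

Lemma orth_sum (k : E -> Cplx) R s : In s R -> ForallOrdPairs orth R ->
  Csum (map (fun t => Cmul (k t) << t, s >>) R) = Cmul (k s) << s, s >>.
Proof.
  induction R as [|t R IH]; intros Hin Hf; [contradiction|].
  inversion Hf as [|a l Hfa Hfr]; subst. simpl. rewrite Forall_forall in Hfa.
  destruct (classic (In s R)) as [HR|HR].
  - rewrite IH, (Hfa s HR); auto. cring.
  - destruct Hin as [Hin|Hin]; [subst t | contradiction].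
    assert (H0 : Csum (map (fun t => Cmul (k t) << t, s >>) R) = Czero).
    { clear IH HR Hfr Hf. induction R as [|a R IHR]; simpl; auto.
      rewrite IHR by (intros; apply Hfa; right; auto).
      rewrite hinner_conj, (Hfa a (or_introl eq_refl)). cring. }
    rewrite H0. cring.
Qed.

Lemma proj_orth R x r : In r R -> ForallOrdPairs orth R -> Cre << r, r >> > 0 ->
  << hsub E x (proj R x), r >> = Czero.
Proof.
  intros Hin Hf Hp. rewrite inner_sub_l. unfold proj. rewrite inner_lsum_scal.
  rewrite orth_sum; auto. unfold proj_coef. rewrite (inner_self_real E r).
  apply Ceq; simpl; field; lra.
Qed.

Lemma gram_schmidt (G : list E) : (forall g, In g G -> D g) -> exists R : list E,
  (forall r, In r R -> D r /\ Cre << r, r >> > 0) /\ ForallOrdPairs orth R /\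
  (forall y, (forall r, In r R -> << y, r >> = Czero) ->
     forall g, In g G -> << y, g >> = Czero).
Proof.
  induction G as [|g G IH]; intros HD.
  - exists nil. split; [intros r []|split; [constructor|intros y _ g []]].
  - destruct IH as [R [H1 [H2 H3]]]; [intros; apply HD; right; auto|].
    set (r := hsub E g (proj R g)).
    assert (Hg : g = r +v proj R g) by (apply vec_ext; intro w; unfold r; inner_simpl; cring).
    assert (Hperp : forall y, (forall s, In s R -> << y, s >> = Czero) ->
                     << y, g >> = << y, r >>).
    { intros y Hy. rewrite Hg at 1. unfold proj.
      rewrite inner_add_r, inner_lsum_orth by auto. cring. }
    destruct (classic (r = hzero E)) as [Hr|Hr].
    + exists R. split; [auto|split; [auto|]]. intros y Hy g' [<-|Hg'].
      * rewrite Hperp, Hr by auto. apply inner_zero_r.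
      * apply H3; auto.
    + exists (r :: R). split; [|split].
      * intros r' [<-|Hr']; [|apply H1; auto]. split; [|now apply inner_self_pos].
        apply D_sub; [apply HD; left; auto|].
        apply D_lsum. intros. apply D_scal, H1; auto.
      * constructor; auto. rewrite Forall_forall. intros s Hs.
        apply proj_orth; auto. apply H1; auto.
      * intros y Hy g' [<-|Hg'].
        -- rewrite Hperp by (intros; apply Hy; right; auto). apply Hy; left; auto.
        -- apply H3; auto. intros; apply Hy; right; auto.
Qed.


Section Resolvent.
Variable lam : R.

Definition T (x : E) : E := hsub E (A x) (RtoC lam *v x).

Lemma T_add x y : D x -> D y -> T (x +v y) = T x +v T y.
Proof. intros. unfold T. rewrite A_add; auto. apply vec_ext; intro w. inner_simpl. cring. Qed.
Lemma T_scal a x : D x -> T (a *v x) = a *v T x.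
Proof. intros. unfold T. rewrite A_scal; auto. apply vec_ext; intro w. inner_simpl. cring. Qed.
Lemma T_sub x y : D x -> D y -> T (hsub E x y) = hsub E (T x) (T y).
Proof. intros. unfold T. rewrite A_sub; auto. apply vec_ext; intro w. inner_simpl. cring. Qed.
Lemma T_sym x y : D x -> D y -> << T x, y >> = << x, T y >>.
Proof. intros. unfold T. inner_simpl. rewrite A_sym; auto. cring. Qed.
Lemma A_T x : A x = T x +v (RtoC lam *v x).
Proof. unfold T. apply vec_ext; intro w. inner_simpl. cring. Qed.

Lemma T_quad x : Cre << T x, x >> = Cre << A x, x >> - lam * Cre << x, x >>.
Proof. unfold T. inner_simpl. simpl. rewrite inner_im_self. ring. Qed.
Lemma A_quad x : Cre << A x, x >> = Cre << T x, x >> + lam * Cre << x, x >>.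
Proof. rewrite T_quad. ring. Qed.

Variable B : E -> E.
Hypothesis B_right_inv : forall y, D (B y) /\ T (B y) = y.
Hypothesis B_left_inv : forall x, D x -> B (T x) = x.

Lemma D_B y : D (B y). Proof. apply B_right_inv. Qed.
Lemma T_B y : T (B y) = y. Proof. apply B_right_inv. Qed.

Lemma B_add x y : B (x +v y) = B x +v B y.
Proof.
  rewrite <- (B_left_inv (B x +v B y)) by (apply D_add; apply D_B).
  now rewrite T_add, !T_B by apply D_B.
Qed.
Lemma B_scal a x : B (a *v x) = a *v B x.
Proof.
  rewrite <- (B_left_inv (a *v B x)) by (apply D_scal, D_B).
  now rewrite T_scal, !T_B by apply D_B.
Qed.
Lemma B_sub x y : B (hsub E x y) = hsub E (B x) (B y).
Proof.
  rewrite <- (B_left_inv (hsub E (B x) (B y))) by (apply D_sub; apply D_B).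
  now rewrite T_sub, !T_B by apply D_B.
Qed.
Lemma B_lsum (c : E -> Cplx) R :
  B (lsum E (map (fun r => c r *v r) R)) = lsum E (map (fun r => c r *v B r) R).
Proof.
  induction R; simpl.
  - transitivity (B (Czero *v hzero E)); [now rewrite scal_zero_v|].
    now rewrite B_scal, scal_zero_v.
  - now rewrite B_add, B_scal, IHR.
Qed.
(* B is symmetric, being the inverse of a symmetric operator. *)
Lemma B_sym y u : << B y, u >> = << y, B u >>.
Proof. rewrite <- (T_B u) at 1. now rewrite <- T_sym, T_B by apply D_B. Qed.

Definition correction (R : list E) (v : E) : E := B (hsub E (T v) (proj R (T v))).

Lemma correction_eq R v : D v -> correction R v = hsub E v (B (proj R (T v))).
Proof. intros Hv. unfold correction. now rewrite B_sub, B_left_inv. Qed.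

(* If R is obtained by Gram–Schmidt from L ++ B L, the correction z satisfies z ⊥ L and
   Az ⊥ L, because ⟨z, l⟩ = ⟨Tz, B l⟩ and Az = Tz + λ z. *)
Lemma correction_orth (L R : list E) v :
  (forall r, In r R -> Cre << r, r >> > 0) -> ForallOrdPairs orth R ->
  (forall y, (forall r, In r R -> << y, r >> = Czero) ->
     forall g, In g (L ++ map B L) -> << y, g >> = Czero) ->
  forall l, In l L -> << correction R v, l >> = Czero /\ << A (correction R v), l >> = Czero.
Proof.
  intros Hpos Horth Hspan l Hl.
  set (y := hsub E (T v) (proj R (T v))).
  assert (Hy : forall g, In g (L ++ map B L) -> << y, g >> = Czero).
  { apply Hspan. intros r Hr. apply proj_orth; auto. }
  assert (Hz : << correction R v, l >> = Czero).
  { unfold correction. fold y. rewrite B_sym. apply Hy, in_or_app. right. now apply in_map. }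
  split; auto.
  rewrite A_T. unfold correction at 1. fold y. rewrite T_B. fold (correction R v).
  inner_simpl. rewrite Hz, Hy by (apply in_or_app; left; auto). cring.
Qed.

Definition quad_err (v q : E) : Cplx :=
  Cadd (Cadd (Copp << v, q >>) (Copp << q, v >>)) << q, B q >>.
Definition norm_err (v q : E) : Cplx :=
  Cadd (Cadd (Copp << v, B q >>) (Copp << B q, v >>)) << B q, B q >>.

Lemma correction_identities R v : D v ->
  let q := proj R (T v) in
  let z := correction R v in
  << T z, z >> = Cadd << T v, v >> (quad_err v q) /\
  << z, z >> = Cadd << v, v >> (norm_err v q).
Proof.
  intros Hv q z.
  assert (Hz : z = hsub E v (B q)) by (apply correction_eq; auto).
  assert (HTz : T z = hsub E (T v) q) by (apply T_B).
  assert (Hs : << T v, B q >> = << v, q >>) by (rewrite T_sym, T_B; auto using D_B).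
  unfold quad_err, norm_err. split.
  - rewrite HTz, Hz. inner_simpl. rewrite Hs. cring.
  - rewrite Hz. inner_simpl. cring.
Qed.

Lemma cnull_inner_swap (a b : nat -> E) :
  cnull (fun m => << b m, a m >>) -> cnull (fun m => << a m, b m >>).
Proof.
  intros H. apply (cnull_ext (fun m => Cconj << b m, a m >>)).
  - intros; symmetry; apply hinner_conj.
  - now apply cnull_conj.
Qed.

(* For a weakly null sequence v_m in D(A) and a fixed finite orthogonal list R ⊂ D(A),
   the projections q_m = P_R(T v_m) have null coefficients ⟨T v_m, s⟩/⟨s,s⟩ =
   ⟨v_m, T s⟩/⟨s,s⟩, so both error terms of the correction vanish in the limit. *)
Section WeaklyNullCorrection.
Variable R : list E.
Hypothesis R_in_D : forall r, In r R -> D r.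
Variable vs : nat -> E.
Hypothesis vs_in_D : forall m, D (vs m).
Hypothesis vs_weakly_null : forall h, cnull (fun m => << vs m, h >>).

Let coef m s := proj_coef (T (vs m)) s.
Let q m := proj R (T (vs m)).

Lemma B_q m : B (q m) = lsum E (map (fun s => coef m s *v B s) R).
Proof. apply B_lsum. Qed.

Lemma cnull_coef s : In s R -> cnull (fun m => coef m s).
Proof.
  intros Hs. unfold coef, proj_coef. apply cnull_scal_r.
  apply (cnull_ext (fun m => << vs m, T s >>)); [|apply vs_weakly_null].
  intros m. symmetry. apply T_sym; auto.
Qed.

Lemma cnull_combination_fixed (f : E -> E) h :
  cnull (fun m => << lsum E (map (fun s => coef m s *v f s) R), h >>).
Proof.
  apply (cnull_ext (fun m => Csum (map (fun s => Cmul (coef m s) << f s, h >>) R))).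
  - intros; symmetry; apply inner_lsum_scal.
  - apply cnull_Csum. intros s Hs. apply cnull_scal_r, cnull_coef; auto.
Qed.

Lemma cnull_combination_seq (f : E -> E) (hm : nat -> E) :
  (forall s, In s R -> cnull (fun m => << f s, hm m >>)) ->
  cnull (fun m => << lsum E (map (fun s => coef m s *v f s) R), hm m >>).
Proof.
  intros H.
  apply (cnull_ext (fun m => Csum (map (fun s => Cmul (coef m s) << f s, hm m >>) R))).
  - intros; symmetry; apply inner_lsum_scal.
  - apply cnull_Csum. intros s Hs. apply cnull_mul; [apply cnull_coef|apply H]; auto.
Qed.

Lemma cnull_q_v : cnull (fun m => << q m, vs m >>).
Proof.
  apply (cnull_combination_seq (fun s => s) vs). intros s _.
  apply cnull_inner_swap, vs_weakly_null.
Qed.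

Lemma cnull_Bq_v : cnull (fun m => << B (q m), vs m >>).
Proof.
  apply (cnull_ext (fun m => << lsum E (map (fun s => coef m s *v B s) R), vs m >>));
    [intros; now rewrite B_q|].
  apply (cnull_combination_seq B vs). intros s _. apply cnull_inner_swap, vs_weakly_null.
Qed.

Lemma cnull_Bq_fixed h : cnull (fun m => << B (q m), h >>).
Proof.
  apply (cnull_ext (fun m => << lsum E (map (fun s => coef m s *v B s) R), h >>));
    [intros; now rewrite B_q|].
  apply cnull_combination_fixed.
Qed.

Lemma cnull_quad_err : cnull (fun m => quad_err (vs m) (q m)).
Proof.
  unfold quad_err. apply cnull_add; [apply cnull_add|]; try apply cnull_opp.
  - apply cnull_inner_swap, cnull_q_v.
  - apply cnull_q_v.
  - apply (cnull_combination_seq (fun s => s)). intros s _.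
    apply cnull_inner_swap, cnull_Bq_fixed.
Qed.

Lemma cnull_norm_err : cnull (fun m => norm_err (vs m) (q m)).
Proof.
  unfold norm_err. apply cnull_add; [apply cnull_add|]; try apply cnull_opp.
  - apply cnull_inner_swap, cnull_Bq_v.
  - apply cnull_Bq_v.
  - apply (cnull_ext (fun m => << lsum E (map (fun s => coef m s *v B s) R), B (q m) >>));
      [intros; now rewrite B_q|].
    apply (cnull_combination_seq B). intros s _. apply cnull_inner_swap, cnull_Bq_fixed.
Qed.

End WeaklyNullCorrection.

Lemma rayleigh_perturb (a e1 e2 eps : R) :
  Rabs a < eps / 4 -> Rabs e1 < eps / 8 -> Rabs e2 < 1 / 2 ->
  Rabs (lam - (a + e1 + lam * (1 + e2)) / (1 + e2)) < eps.
Proof.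
  intros Ha He1 He2.
  assert (Hz : 1 / 2 < 1 + e2) by (revert He2; unfold Rabs; destruct Rcase_abs; lra).
  replace (lam - (a + e1 + lam * (1 + e2)) / (1 + e2)) with (- ((a + e1) / (1 + e2)))
    by (field; lra).
  rewrite Rabs_Ropp. unfold Rdiv. rewrite Rabs_mult, Rabs_inv, (Rabs_right (1 + e2)) by lra.
  assert (Hinv : 0 < / (1 + e2) < 2).
  { split; [apply Rinv_0_lt_compat; lra|].
    rewrite <- (Rinv_inv 2). apply Rinv_lt_contravar; lra. }
  pose proof (Rabs_triang a e1). pose proof (Rabs_pos (a + e1)). nra.
Qed.

Lemma correction_eigvec (eps : R) (L R : list E) (v : E) :
  (forall r, In r R -> Cre << r, r >> > 0) -> ForallOrdPairs orth R ->
  (forall y, (forall r, In r R -> << y, r >> = Czero) ->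
     forall g, In g (L ++ map B L) -> << y, g >> = Czero) ->
  D v -> Cre << v, v >> = 1 -> Rabs (Cre << A v, v >> - lam) < eps / 4 ->
  Rabs (Cre (quad_err v (proj R (T v)))) < eps / 8 ->
  Rabs (Cre (norm_err v (proj R (T v)))) < 1 / 2 ->
  exists mu, compression_eigvec L (correction R v) mu /\ Rabs (lam - mu) < eps.
Proof.
  intros HRpos HRo HRsp Hv Hvn Hva E1 E2. set (z := correction R v).
  destruct (correction_identities R v Hv) as [C1 C2]. fold z in C1, C2.
  set (e1 := quad_err v (proj R (T v))) in *.
  set (e2 := norm_err v (proj R (T v))) in *.
  assert (Hzz : Cre << z, z >> = 1 + Cre e2) by (rewrite C2; simpl; lra).
  assert (HzA : Cre << A z, z >> = (Cre << A v, v >> - lam) + Cre e1 + lam * (1 + Cre e2)).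
  { rewrite A_quad, C1. cbn [Cadd Cre]. rewrite T_quad, Hvn, Hzz. ring. }
  assert (Hpos : Cre << z, z >> > 1 / 2).
  { rewrite Hzz. revert E2. unfold Rabs; destruct Rcase_abs; lra. }
  exists (Cre << A z, z >> / Cre << z, z >>). split.
  - split; [apply D_B|]. split; [|split].
    + intros Hz0. rewrite Hz0, inner_zero_l in Hpos. simpl in Hpos. lra.
    + apply (correction_orth L R); auto.
    + apply rayleigh_eq; [apply D_B | lra].
  - rewrite HzA, Hzz. apply rayleigh_perturb; auto.
Qed.

Lemma spectral_step (L : list E) (vs : nat -> E) (eps : R) :
  (forall l, In l L -> D l) -> eps > 0 ->
  (forall m, D (vs m) /\ Cre << vs m, vs m >> = 1) ->
  (forall h, cnull (fun m => << vs m, h >>)) ->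
  (exists N, forall m, (m >= N)%nat -> Rabs (Cre << A (vs m), vs m >> - lam) < eps / 4) ->
  exists z mu, compression_eigvec L z mu /\ Rabs (lam - mu) < eps.
Proof.
  intros HL Heps Hvs Hweak [N1 HN1].
  assert (HG : forall g, In g (L ++ map B L) -> D g).
  { intros g Hg. apply in_app_or in Hg. destruct Hg as [Hg|Hg]; auto.
    apply in_map_iff in Hg. destruct Hg as [l [<- _]]. apply D_B. }
  destruct (gram_schmidt _ HG) as [R [HRD [HRo HRsp]]].
  assert (HvD : forall m, D (vs m)) by apply Hvs.
  assert (HRD' : forall r, In r R -> D r) by apply HRD.
  destruct (cnull_quad_err R HRD' vs HvD Hweak (eps / 8)) as [N2 HN2]; [lra|].
  destruct (cnull_norm_err R HRD' vs HvD Hweak (1 / 2)) as [N3 HN3]; [lra|].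
  set (m := (N1 + N2 + N3)%nat). exists (correction R (vs m)).
  apply correction_eigvec; try apply Hvs.
  - intros r Hr. apply HRD; auto.
  - exact HRo.
  - exact HRsp.
  - apply HN1. unfold m. lia.
  - apply HN2. unfold m. lia.
  - apply HN3. unfold m. lia.
Qed.

Section ApproximateEigenvectors.
Variable K : nat.
Hypothesis hK : (1 <= K)%nat.
Variable x : nat -> nat -> E.
Hypothesis hD : forall n j, (j < K)%nat -> D (x n j).
Hypothesis hON : forall n i j, (i < K)%nat -> (j < K)%nat ->
  << x n i, x n j >> = if Nat.eq_dec i j then Cone else Czero.
Hypothesis hweak : forall j, (j < K)%nat -> weakly_to_zero E (fun n => x n j).
Hypothesis hlam : dist_tends_to_zero lam (fun n => in_spectrum_compression E A (W E K x n)).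

Lemma D_W m v : span E (W E K x m) v -> D v.
Proof. apply D_span. intros w Hw. destruct (in_W E K x m w Hw) as [j [Hj ->]]. auto. Qed.

Definition good_vector (eps : R) (m : nat) (v : E) : Prop :=
  span E (W E K x m) v /\ Cre << v, v >> = 1 /\ Rabs (Cre << A v, v >> - lam) < eps.

(* Normalizing an eigenvector of A_{|W_m} with eigenvalue μ near λ gives a good vector. *)
Lemma good_vector_eventually eps : eps > 0 ->
  exists N, forall m, (m >= N)%nat -> exists v, good_vector eps m v.
Proof.
  intros He. destruct (hlam eps He) as [N HN]. exists N. intros m Hm.
  destruct (HN m Hm) as [mu [[v0 [Hsp [Hnz Heig]]] Hmu]].
  assert (HD0 : D v0) by (eapply D_W; eauto).
  set (n0 := Cre << v0, v0 >>).
  assert (Hn0 : n0 > 0) by (apply inner_self_pos; auto).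
  set (s := sqrt n0).
  assert (Hs : s > 0) by (apply sqrt_lt_R0; auto).
  assert (Hss : s * s = n0) by (apply sqrt_sqrt; lra).
  assert (Hre : Cre << A v0, v0 >> = mu * n0).
  { specialize (Heig v0 Hsp). rewrite inner_sub_l, hinner_scal in Heig.
    apply (f_equal Cre) in Heig. simpl in Heig. rewrite inner_im_self in Heig.
    unfold n0. lra. }
  pose proof (inner_im_self E v0) as Hi0.
  exists (RtoC (/ s) *v v0). split; [|split].
  - apply span_scal; auto.
  - inner_simpl. simpl. rewrite Hi0. fold n0. rewrite <- Hss. field. lra.
  - rewrite A_scal by auto. inner_simpl. simpl. rewrite Hre.
    replace (/ s * (/ s * (mu * n0) - - 0 * Cim << A v0, v0 >>)
             - 0 * (/ s * Cim << A v0, v0 >> + - 0 * (mu * n0))) with mu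
      by (rewrite <- Hss; field; lra).
    rewrite Rabs_minus_sym. auto.
Qed.

Lemma good_sequence eps : eps > 0 -> exists vs : nat -> E,
  (forall m, span E (W E K x m) (vs m) /\ Cre << vs m, vs m >> = 1) /\
  exists N, forall m, (m >= N)%nat -> Rabs (Cre << A (vs m), vs m >> - lam) < eps.
Proof.
  intros He.
  assert (Hsel : forall m, exists v, span E (W E K x m) v /\ Cre << v, v >> = 1 /\
                   ((exists v', good_vector eps m v') -> good_vector eps m v)).
  { intros m. destruct (classic (exists v', good_vector eps m v')) as [[v' Hv']|Hn].
    - exists v'. destruct Hv' as [H1 [H2 H3]]. repeat split; auto.
    - exists (x m 0%nat). split; [|split; [|tauto]].
      + unfold W. destruct K as [|k]; [lia|]. apply (span_app_l E (x m 0%nat :: nil)), span_single.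
      + rewrite hON by lia. reflexivity. }
  destruct (choice _ Hsel) as [vs Hvs]. exists vs. split.
  { intros m. destruct (Hvs m) as [Hsp [Hn _]]. auto. }
  destruct (good_vector_eventually eps He) as [N HN]. exists N. intros m Hm.
  destruct (Hvs m) as [_ [_ Hg]]. apply (Hg (HN m Hm)).
Qed.

Lemma orth_approx_eigvec (L : list E) (eps : R) : (forall l, In l L -> D l) -> eps > 0 ->
  exists z mu, compression_eigvec L z mu /\ Rabs (lam - mu) < eps.
Proof.
  intros HL He. destruct (good_sequence (eps / 4)) as [vs [Hvs Hgood]]; [lra|].
  apply (spectral_step L vs eps); auto.
  - intros m. destruct (Hvs m) as [Hsp Hn]. split; auto. eapply D_W; eauto.
  - apply (unit_span_weakly_null E K x hON hweak vs Hvs).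
Qed.

Section SpuriousSequence.
Variable c : R.
Hypothesis B_bounded : forall y, hnorm E (B y) <= c * hnorm E y.
Variable e : nat -> E.
Hypothesis e_dense : forall x eps, eps > 0 -> exists k, hnorm E (hsub E x (e k)) < eps.

Lemma next_vector_exists (L : list E) (n : nat) : exists z,
  (forall l, In l L -> D l) ->
  exists mu, compression_eigvec L z mu /\ Rabs (lam - mu) < / (INR n + 1).
Proof.
  destruct (classic (forall l, In l L -> D l)) as [HL|HL].
  - destruct (orth_approx_eigvec L (/ (INR n + 1)) HL) as [z [mu H]].
    { apply Rinv_0_lt_compat. pose proof (pos_INR n). lra. }
    exists z. intros _. exists mu. auto.
  - exists (hzero E). intros H; contradiction.
Qed.

Definition next_vector (L : list E) (n : nat) : E :=
  proj1_sig (constructive_indefinite_description _ (next_vector_exists L n)).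

Lemma next_vector_spec L n : (forall l, In l L -> D l) ->
  exists mu, compression_eigvec L (next_vector L n) mu /\ Rabs (lam - mu) < / (INR n + 1).
Proof. unfold next_vector. destruct (constructive_indefinite_description _ _). auto. Qed.

Definition prefix (Vn : list E) (n : nat) : list E := Vn ++ B (e n) :: nil.

Fixpoint V (n : nat) : list E :=
  match n with
  | O => nil
  | S n => prefix (V n) n ++ next_vector (prefix (V n) n) n :: nil
  end.

Lemma prefix_in_D Vn n : (forall v, In v Vn -> D v) -> forall v, In v (prefix Vn n) -> D v.
Proof.
  intros HV v Hv. apply in_app_or in Hv. destruct Hv as [Hv|[<-|[]]]; auto. apply D_B.
Qed.

Lemma V_in_D n : forall v, In v (V n) -> D v.
Proof.
  induction n as [|n IH]; simpl; intros v Hv; [contradiction|].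
  pose proof (prefix_in_D (V n) n IH) as HL.
  apply in_app_or in Hv. destruct Hv as [Hv|[<-|[]]]; auto.
  destruct (next_vector_spec _ n HL) as [mu [[Hz _] _]]. auto.
Qed.

Lemma V_nested n v : span E (V n) v -> span E (V (S n)) v.
Proof. intros Hv. simpl. now apply span_app_l, span_app_l. Qed.

Lemma B_graph_approx x0 y : D x0 ->
  hnorm E (hsub E x0 (B y)) ^ 2 + hnorm E (hsub E (A x0) (A (B y))) ^ 2 <=
  (c * c + 2 + 2 * (lam * lam) * (c * c)) * Cre << hsub E (T x0) y, hsub E (T x0) y >>.
Proof.
  intros Hx. set (d := hsub E (T x0) y).
  assert (Hx1 : hsub E x0 (B y) = B d) by (unfold d; now rewrite B_sub, B_left_inv).
  assert (Hx2 : hsub E (A x0) (A (B y)) = d +v (RtoC lam *v B d)).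
  { rewrite <- A_sub by auto using D_B. now rewrite Hx1, A_T, T_B. }
  assert (HBd : Cre << B d, B d >> <= c * c * Cre << d, d >>).
  { rewrite <- !hnorm_sq. pose proof (B_bounded d). pose proof (sqrt_pos (Cre << B d, B d >>)).
    unfold hnorm in *. simpl. nra. }
  rewrite Hx1, Hx2, !hnorm_sq. pose proof (norm_add_scal_bound E d (B d) lam).
  pose proof (hinner_pos E d). pose proof (hinner_pos E (B d)). nra.
Qed.

Lemma V_dense x0 eps : D x0 -> eps > 0 -> exists n y, span E (V n) y /\
  hnorm E (hsub E x0 y) ^ 2 + hnorm E (hsub E (A x0) (A y)) ^ 2 < eps ^ 2.
Proof.
  intros Hx Heps.
  set (M := c * c + 2 + 2 * (lam * lam) * (c * c)).
  assert (HM : 2 <= M) by (unfold M; nra).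
  set (d0 := eps / (M + 1)).
  assert (Hd0 : d0 > 0) by (unfold d0; apply Rdiv_lt_0_compat; lra).
  assert (Hsmall : M * (d0 * d0) < eps ^ 2).
  { unfold d0. replace (M * (eps / (M + 1) * (eps / (M + 1))))
      with (eps ^ 2 * (M / ((M + 1) * (M + 1)))) by (field; lra).
    assert (M / ((M + 1) * (M + 1)) < 1).
    { apply (Rmult_lt_reg_r ((M + 1) * (M + 1))); [nra|]. unfold Rdiv.
      rewrite Rmult_assoc, Rinv_l by nra. nra. }
    assert (0 < eps ^ 2) by nra. nra. }
  destruct (e_dense (T x0) d0 Hd0) as [k Hk].
  assert (Hdk : Cre << hsub E (T x0) (e k), hsub E (T x0) (e k) >> < d0 * d0).
  { rewrite <- hnorm_sq. pose proof (sqrt_pos (Cre << hsub E (T x0) (e k), hsub E (T x0) (e k) >>)).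
    unfold hnorm in *. simpl. nra. }
  exists (S k), (B (e k)). split.
  - simpl. apply span_app_l, span_app_r, span_single.
  - pose proof (B_graph_approx x0 (e k) Hx). fold M in H. nra.
Qed.

Lemma V_eigenvalue : dist_tends_to_zero lam (fun n => in_spectrum_compression E A (V n)).
Proof.
  intros eps Heps. destruct (archimed_cor1 eps Heps) as [N [HN HN0]]. exists N.
  intros n Hn. destruct n as [|n]; [lia|]. simpl V.
  pose proof (prefix_in_D (V n) n (V_in_D n)) as HL.
  destruct (next_vector_spec _ n HL) as [mu [Heig Hmu]].
  exists mu. split; [now apply compression_eigvec_spectrum|].
  assert (Hinv : / (INR n + 1) <= / INR N).
  { apply Rinv_le_contravar; [apply lt_0_INR; lia|].
    rewrite <- S_INR. apply le_INR. lia. }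
  lra.
Qed.

Lemma V_spurious : ~ in_spectrum E D A lam -> spurious E D A lam.
Proof.
  intros Hns. exists V. split; [|split; [|split; [|split]]]; auto.
  - exact V_in_D.
  - exact V_nested.
  - exact V_dense.
  - exact V_eigenvalue.
Qed.

End SpuriousSequence.
End ApproximateEigenvectors.
End Resolvent.
End SelfAdjoint.

Theorem mainTheorem2 (E : HilbertSpace) (D : E -> Prop) (A : E -> E)
  (hA : is_self_adjoint E D A)
  (K : nat) (hK : (1 <= K)%nat)
  (x : nat -> nat -> E)
  (hD : forall n j, (j < K)%nat -> D (x n j))
  (hON : forall n i j, (i < K)%nat -> (j < K)%nat ->
           hinner E (x n i) (x n j) = if Nat.eq_dec i j then Cone else Czero)
  (hweak : forall j, (j < K)%nat -> weakly_to_zero E (fun n => x n j))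
  (lam : R)
  (hlam : dist_tends_to_zero lam
            (fun n => in_spectrum_compression E A (map (x n) (seq 0 K)))) :
  spurious E D A lam \/ in_spectrum E D A lam.
Proof.
  destruct (classic (in_spectrum E D A lam)) as [Hspec|Hres]; [right; exact Hspec|left].
  destruct (NNPP _ Hres) as [B [HB1 [HB2 [c Hc]]]].
  destruct (hseparable E) as [e He].
  exact (V_spurious E D A hA lam B HB1 HB2 K hK x hD hON hweak hlam c Hc e He Hres).
Qed.
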